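(* Let $A$ be a finite alphabet, let $f$ be a bLSP morphism on $A$ and let $\mathbf{w}$ be an infinite word over $A$. If $f(\mathbf{w})$ is LSP, then $\mathbf{w}$ is LSP.
   Context: A finite word $u$ is a left special factor of a word $w$ if there are distinct letters $x\neq y$ with $xu$ and $yu$ factors of $w$. A word is LSP if every left special factor of it is a prefix of it. A bLSP morphism on $A$ is an endomorphism $f$ of $A^*$ such that there is a letter $\alpha$ with $f(\alpha)=\alpha$ and, for every letter $\beta\neq\alpha$, there is a letter $\gamma$ with $f(\beta)=f(\gamma)\beta$. *)

From mathcomp Require Import all_boot.
Set Implicit Arguments. Unset Strict Implicit. Unset Printing Implicit Defensive.

Definition infword (A : Type) := nat -> A.

Definition factor (A : finType) (u : seq A) (w : infword A) : Prop :=
  exists i, u = mkseq (fun k => w (i + k)) (size u).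
Definition prefix_of (A : finType) (u : seq A) (w : infword A) : Prop :=
  u = mkseq w (size u).

Definition left_special (A : finType) (u : seq A) (w : infword A) : Prop :=
  exists x y : A, x != y /\ factor (x :: u) w /\ factor (y :: u) w.

Definition LSP (A : finType) (w : infword A) : Prop :=
  forall u, left_special u w -> prefix_of u w.

Definition morph (A : finType) (f : A -> seq A) (s : seq A) : seq A :=
  flatten (map f s).

Definition bLSP (A : finType) (f : A -> seq A) : Prop :=
  exists alpha : A, f alpha = [:: alpha] /\
    forall beta : A, beta != alpha -> exists gamma : A, f beta = rcons (f gamma) beta.

(* Image of an infinite word under a non-erasing morphism:
   the n-th letter of f(w) is the n-th letter of f(w_0 ... w_n)
   (which has length >= n+1 when f is non-erasing). *)
Definition morph_inf (A : finType) (f : A -> seq A) (w : infword A) : infword A :=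
  fun n => nth (w 0) (morph f (mkseq w n.+1)) n.

From mathcomp Require Import all_boot.
Set Implicit Arguments. Unset Strict Implicit.

(* Unwinding the recursion f(beta) = f(gamma) beta shows that every image f(b)
   is alpha t with alpha not in t and t ending with b.  Hence in f(w) the
   letter alpha marks exactly the starts of the blocks f(w_i), so f(w) can be
   parsed back uniquely.  If x u and y u are factors of w, extending them by
   the next letter a of w shows that x f(u) alpha and y f(u) alpha are factors
   of f(w), since f(x) ends with x and f(a) starts with alpha.  So f(u) alpha is
   left special in f(w), hence a prefix of it, and parsing this prefix shows
   that u is a prefix of w. *)

Definition block_code (A : finType) (f : A -> seq A) (alpha : A) : Prop :=
  forall b, exists t, f b = alpha :: t /\ alpha \notin t /\ last alpha t = b.

Lemma bLSP_block_code (A : finType) (f : A -> seq A) :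
  bLSP f -> exists alpha, block_code f alpha.
Proof.
move=> [alpha [f_alpha f_beta]]; exists alpha => b.
have [n] := ubnP (size (f b)); elim: n b => // n IHn b size_fb.
have [->|b_neq] := eqVneq b alpha; first by exists [::]; rewrite f_alpha.
have [g f_b] := f_beta b b_neq.
have [|t [f_g [t_free t_last]]] := IHn g; first by rewrite f_b size_rcons in size_fb.
exists (rcons t b); rewrite f_b f_g rcons_cons mem_rcons in_cons negb_or.
by rewrite eq_sym b_neq t_free last_rcons.
Qed.

Lemma morph_cat (A : finType) (f : A -> seq A) s1 s2 :
  morph f (s1 ++ s2) = morph f s1 ++ morph f s2.
Proof. by rewrite /morph map_cat flatten_cat. Qed.

Lemma morph_cons (A : finType) (f : A -> seq A) a s :
  morph f (a :: s) = f a ++ morph f s.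
Proof. by []. Qed.

Lemma morph_seq1 (A : finType) (f : A -> seq A) a : morph f [:: a] = f a.
Proof. exact: cats0. Qed.

Lemma mkseqD (T : Type) (w : nat -> T) i m :
  mkseq w (i + m) = mkseq w i ++ mkseq (fun k => w (i + k)) m.
Proof.
by rewrite /mkseq iotaD map_cat add0n -{2}(addn0 i) iotaDl -map_comp.
Qed.

Lemma notin_cat_inj (T : eqType) (alpha : T) (s1 s2 r1 r2 : seq T) :
  alpha \notin s1 -> alpha \notin s2 ->
  head alpha r1 = alpha -> head alpha r2 = alpha ->
  s1 ++ r1 = s2 ++ r2 -> s1 = s2.
Proof.
elim: s1 s2 => [|c s1 IHs] [|d s2] //=.
- by move=> _ s2_free r1_head _ eq_r1; move: s2_free; rewrite -r1_head eq_r1 mem_head.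
- by move=> s1_free _ _ r2_head eq_r2; move: s1_free; rewrite -r2_head -eq_r2 mem_head.
- rewrite !in_cons !negb_or => /andP[_ s1_free] /andP[_ s2_free] r1_head r2_head [-> eq_cat].
  by rewrite (IHs s2 s1_free s2_free r1_head r2_head eq_cat).
Qed.

Section NonErasing.

Variables (A : finType) (f : A -> seq A) (w : infword A).
Hypothesis f_nonerasing : forall b, 0 < size (f b).

Lemma size_morph s : size s <= size (morph f s).
Proof.
elim: s => //= a s IHs; rewrite morph_cons size_cat -add1n.
by rewrite leq_add // f_nonerasing.
Qed.

Lemma size_morph_mkseq n : n <= size (morph f (mkseq w n)).
Proof. by have := size_morph (mkseq w n); rewrite size_mkseq. Qed.

Lemma morph_infE N n :
  n < size (morph f (mkseq w N)) ->
  morph_inf f w n = nth (w 0) (morph f (mkseq w N)) n.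
Proof.
rewrite /morph_inf => n_lt; have [le_nN|lt_Nn] := leqP n.+1 N.
  by rewrite -(subnKC le_nN) mkseqD morph_cat nth_cat size_morph_mkseq.
by rewrite -(subnKC (ltnW lt_Nn)) mkseqD morph_cat nth_cat n_lt.
Qed.

Lemma factor_morph_inf N p s t :
  morph f (mkseq w N) = p ++ s ++ t -> factor s (morph_inf f w).
Proof.
move=> eq_morph; exists (size p).
apply: (@eq_from_nth _ (w 0)); first by rewrite size_mkseq.
move=> k lt_k; rewrite nth_mkseq // (morph_infE (N := N)); last first.
  by rewrite eq_morph !size_cat ltn_add2l (leq_trans lt_k) ?leq_addr.
by rewrite eq_morph nth_cat ltnNge leq_addr /= addKn nth_cat lt_k.
Qed.

Lemma prefix_of_morph_inf v :
  prefix_of v (morph_inf f w) -> v = take (size v) (morph f (mkseq w (size v))).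
Proof.
move=> v_prefix; have le_v := size_morph_mkseq (size v).
apply: (@eq_from_nth _ (w 0)); first by rewrite size_take_min (minn_idPl le_v).
move=> k lt_k; rewrite nth_take // {1}v_prefix nth_mkseq //.
by rewrite (morph_infE (N := size v)) // (leq_trans lt_k).
Qed.

End NonErasing.

Section BlockCode.

Variables (A : finType) (f : A -> seq A) (alpha : A).
Hypothesis f_code : block_code f alpha.

Lemma block_code_nonerasing b : 0 < size (f b).
Proof. by have [t [-> _]] := f_code b. Qed.

Lemma head_morph_cat s r :
  head alpha r = alpha -> head alpha (morph f s ++ r) = alpha.
Proof. by case: s => // a s _; rewrite morph_cons; have [t [-> _]] := f_code a. Qed.

Lemma morph_parse s t r :
  morph f t = morph f s ++ alpha :: r -> s = take (size s) t.
Proof.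
elim: s t r => [|a s IHs] [|b t] r //=.
  by rewrite morph_cons; have [ta [-> _]] := f_code a.
rewrite !morph_cons -catA.
have [ta [-> [ta_free ta_last]]] := f_code a.
have [tb [-> [tb_free tb_last]]] := f_code b.
move=> [eq_cat]; have eq_tb : tb = ta.
  apply: (notin_cat_inj tb_free ta_free _ _ eq_cat); last exact: head_morph_cat.
  by rewrite -[morph f t]cats0 head_morph_cat.
move: eq_cat; rewrite eq_tb => /eqP; rewrite eqseq_cat // => /andP[_ /eqP eq_morph].
by rewrite -(IHs t r eq_morph) -tb_last -ta_last eq_tb.
Qed.

Variable w : infword A.

Lemma factor_cons_morph_inf z u :
  factor (z :: u) w -> factor (z :: rcons (morph f u) alpha) (morph_inf f w).
Proof.
move=> [i eq_zu]; set a := w (i + (size u).+1).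
have eq_prefix : mkseq w (i + (size u).+2) = mkseq w i ++ rcons (z :: u) a.
  by rewrite mkseqD mkseqS eq_zu.
have [tz [f_z [_ tz_last]]] := f_code z; have [ta [f_a _]] := f_code a.
apply: (@factor_morph_inf _ f w block_code_nonerasing (i + (size u).+2)
          (morph f (mkseq w i) ++ belast alpha tz) _ ta).
rewrite eq_prefix morph_cat -cats1 morph_cat morph_cons morph_seq1 f_a f_z.
by rewrite lastI tz_last -!catA cat_rcons /= cat_rcons.
Qed.

Lemma left_special_morph_inf u :
  left_special u w -> left_special (rcons (morph f u) alpha) (morph_inf f w).
Proof.
move=> [x [y [neq_xy [xu_factor yu_factor]]]]; exists x, y.
by split => //; split; apply: factor_cons_morph_inf.
Qed.

Lemma prefix_of_morph_inf_rcons u :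
  prefix_of (rcons (morph f u) alpha) (morph_inf f w) -> prefix_of u w.
Proof.
set v := rcons (morph f u) alpha => /(prefix_of_morph_inf block_code_nonerasing).
set m := morph f _ => eq_v.
have eq_m : m = morph f u ++ alpha :: drop (size v) m.
  by rewrite -{1}(cat_take_drop (size v) m) -eq_v cat_rcons.
have le_uv : size u <= size v.
  by rewrite size_rcons ltnW // ltnS size_morph //; apply: block_code_nonerasing.
rewrite /prefix_of (morph_parse eq_m) -(subnKC le_uv) mkseqD.
by rewrite take_size_cat ?size_mkseq.
Qed.

End BlockCode.

Unset Implicit Arguments.

Theorem lemma2 (A : finType) (f : A -> seq A) (w : nat -> A) :
  bLSP f -> LSP (morph_inf f w) -> LSP w.
Proof.
move=> /bLSP_block_code [alpha f_code] fw_LSP u u_special.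
apply: (prefix_of_morph_inf_rcons f_code); apply: fw_LSP.
exact: left_special_morph_inf.
Qed.
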